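(* Let $E$ be a finite extension of $\mathbb{Q}_p$ with ring of integers $\mathcal{O}$ and maximal ideal $\lambda$, let $n \ge 1$, let $M = (\mathcal{O}/\lambda^n)^2$ and let $A \in \mathrm{End}_{\mathcal{O}}(M)$ with characteristic polynomial $f_A(X)$. Suppose there exist $\alpha, \beta \in \mathcal{O}/\lambda^n$ such that $f_A(X) = (X-\alpha)(X-\beta)$ and $\alpha - \beta$ is divisible exactly by $\lambda^m$ for some integer $0 \le m \le n-1$. Then there exist $e_1, e_2 \in M$ with $\lambda^{n-m-1}e_1 \neq 0$ and $\lambda^{n-m-1}e_2 \neq 0$ such that $Ae_1 = \alpha e_1$ and $Ae_2 = \beta e_2$. *)

From HB Require Import structures.
From mathcomp Require Import all_boot all_order all_algebra.
Set Implicit Arguments. Unset Strict Implicit. Unset Printing Implicit Defensive.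
Import Order.TTheory GRing.Theory Num.Theory.
Local Open Scope ring_scope.

Definition dvdO (R : comNzRingType) (a b : R) : Prop := exists c : R, b = c * a.

(* pi is a uniformizer of the integral domain O, i.e. O is a discrete
   valuation ring with maximal ideal lambda = (pi): pi is a nonzero non-unit
   and every nonzero element is a unit times a power of pi. *)
Definition uniformizer (O : idomainType) (pi : O) : Prop :=
  pi != 0 /\ pi \isn't a GRing.unit /\
  forall x : O, x != 0 -> exists (k : nat) (u : O), u \is a GRing.unit /\ x = u * pi ^+ k.

(* O is the ring of integers of a finite extension E of Q_p, with maximal
   ideal lambda = (pi): O is a complete discrete valuation ring of
   characteristic 0 whose residue field O/lambda is finite of characteristic p. *)
Definition padic_integer_ring (p : nat) (O : idomainType) (pi : O) : Prop :=
  [/\ prime p /\ uniformizer pi,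
      (forall k : nat, (0 < k)%N -> k%:R != 0 :> O),
      (* residue characteristic p *)
      dvdO pi (p%:R : O),
      (* finite residue field *)
      (exists s : seq O, forall x : O, exists2 r, r \in s & dvdO pi (x - r)) &
      (forall x : nat -> O, (forall k, dvdO (pi ^+ k) (x k.+1 - x k)) ->
         exists y : O, forall k, dvdO (pi ^+ k) (y - x k))].

(* congruence modulo lambda^n = (pi^n) of elements, polynomials, matrices:
   these model equality in O/lambda^n, (O/lambda^n)[X], and M = (O/lambda^n)^2 *)
Definition congO (O : idomainType) (pi : O) (n : nat) (a b : O) : Prop :=
  dvdO (pi ^+ n) (a - b).
Definition cong_poly (O : idomainType) (pi : O) (n : nat) (f g : {poly O}) : Prop :=
  forall i : nat, congO pi n f`_i g`_i.
Definition cong_mx (O : idomainType) (pi : O) (n r c : nat) (u v : 'M[O]_(r, c)) : Prop :=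
  forall i j, congO pi n (u i j) (v i j).

(* Put B := alpha - A.  Since B * adj B = det B and det B = char_poly A (alpha)
   vanishes mod lambda^n, every column of adj B is an alpha-eigenvector mod
   lambda^n.  For a 2x2 matrix the diagonal of adj B is that of B swapped, so
   tr (adj B) = tr B = alpha - beta mod lambda^n, which is not divisible by
   lambda^(m+1); hence neither is some diagonal entry of adj B, and the column
   e through it keeps lambda^(n-m-1) e nonzero mod lambda^n. *)

From HB Require Import structures.
From mathcomp Require Import all_boot all_order all_algebra.
From mathcomp Require Import ring zify.
From Stdlib Require Import Classical.
Set Implicit Arguments. Unset Strict Implicit. Unset Printing Implicit Defensive.
Import Order.TTheory GRing.Theory Num.Theory.
Local Open Scope ring_scope.

Section Divisibility.
Variable R : comNzRingType.
Implicit Types a b c x : R.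

Lemma dvdO0 a : dvdO a 0.
Proof. by exists 0; rewrite mul0r. Qed.

Lemma dvdOD a b c : dvdO a b -> dvdO a c -> dvdO a (b + c).
Proof. by move=> [u ->] [v ->]; exists (u + v); rewrite mulrDl. Qed.

Lemma dvdON a b : dvdO a b -> dvdO a (- b).
Proof. by move=> [u ->]; exists (- u); rewrite mulNr. Qed.

Lemma dvdO_mulr a b c : dvdO a b -> dvdO a (b * c).
Proof. by move=> [u ->]; exists (u * c); rewrite mulrAC. Qed.

Lemma dvdO_trans a b c : dvdO a b -> dvdO b c -> dvdO a c.
Proof. by move=> [u ->] [v ->]; exists (v * u); rewrite mulrA. Qed.

Lemma dvdO_exp2l x k l : (k <= l)%N -> dvdO (x ^+ k) (x ^+ l).
Proof. by move=> /subnK <-; exists (x ^+ (l - k)); rewrite exprD. Qed.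

Lemma dvdO_sum a I (r : seq I) (P : pred I) (F : I -> R) :
  (forall i, P i -> dvdO a (F i)) -> dvdO a (\sum_(i <- r | P i) F i).
Proof. by move=> dvdF; apply: big_ind => //; [exact: dvdO0 | exact: dvdOD]. Qed.

End Divisibility.

Lemma horner_char_poly (R : comNzRingType) k (A : 'M[R]_k) a :
  (char_poly A).[a] = \det (a%:M - A).
Proof.
rewrite /char_poly -[_.[a]]/(horner_eval a _) -det_map_mx.
by congr (\det _); apply/matrixP => i j; rewrite !mxE /= rmorphB rmorphMn /= !horner_evalE hornerX hornerC.
Qed.

Lemma mxtrace2 (R : comNzRingType) (B : 'M[R]_2) : \tr B = B 0 0 + B 1 1.
Proof.
by rewrite /mxtrace !big_ord_recl big_ord0 addr0; congr (B _ _ + B _ _); apply/val_inj.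
Qed.

Lemma mxtrace_adj2 (R : comNzRingType) (B : 'M[R]_2) : \tr (\adj B) = \tr B.
Proof.
rewrite !mxtrace2 !mxE /cofactor !det_mx11 !mxE /= sqrrN expr1n !expr0 !mul1r addrC.
by congr (B _ _ + B _ _); apply/val_inj.
Qed.

Section Congruence.
Variables (O : idomainType) (pi : O) (n : nat).
Hypothesis pi_neq0 : pi != 0.

Lemma cong_poly_horner x (p q : {poly O}) :
  cong_poly pi n p q -> congO pi n p.[x] q.[x].
Proof.
move=> pq; rewrite /congO -hornerN -hornerD horner_coef.
by apply: dvdO_sum => i _; rewrite coefD coefN; apply/dvdO_mulr/pq.
Qed.

Lemma scaled_not_congO0 m x : (m < n)%N -> ~ dvdO (pi ^+ m.+1) x ->
  ~ congO pi n (pi ^+ (n - m - 1) * x) 0.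
Proof.
move=> lt_mn ndvd [c]; rewrite subr0 => hc; apply: ndvd; exists c.
have pin : pi ^+ n = pi ^+ (n - m - 1) * pi ^+ m.+1 by rewrite -exprD; congr (_ ^+ _); lia.
by apply: (mulfI (expf_neq0 (n - m - 1) pi_neq0)); rewrite hc pin mulrCA.
Qed.

Lemma adj_col_eigenvector k (A : 'M[O]_k) a j :
  congO pi n (\det (a%:M - A)) 0 ->
  cong_mx pi n (A *m col j (\adj (a%:M - A))) (a *: col j (\adj (a%:M - A))).
Proof.
move=> [c]; rewrite subr0 => hc i l.
move: (mul_mx_adj (a%:M - A)) => /matrixP/(_ i j).
rewrite mulmxBl mul_scalar_mx !mxE (ord1 l) /congO => eq_ij.
under eq_bigr do rewrite mxE.
rewrite -opprB; apply: dvdON; move: eq_ij => /= ->.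
by case: (i == j); [exists c | exact: dvdO0].
Qed.

Lemma eigenvector_mx2 m (A : 'M[O]_2) a : (m < n)%N ->
  congO pi n (\det (a%:M - A)) 0 -> ~ dvdO (pi ^+ m.+1) (\tr (a%:M - A)) ->
  exists e : 'cV[O]_2,
    ~ cong_mx pi n (pi ^+ (n - m - 1) *: e) 0 /\ cong_mx pi n (A *m e) (a *: e).
Proof.
move=> lt_mn det0 ndvd_tr; set B := a%:M - A.
have [j ndvd_adj] : exists j, ~ dvdO (pi ^+ m.+1) (\adj B j j).
  apply: NNPP => no_j; apply: ndvd_tr; rewrite -mxtrace_adj2 mxtrace2.
  by apply: dvdOD; apply: NNPP => ndvd; apply: no_j; eexists; exact: ndvd.
exists (col j (\adj B)); split; last exact: adj_col_eigenvector.
rewrite mxE in ndvd_adj.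
by move/(_ j 0); rewrite !mxE; apply: scaled_not_congO0.
Qed.

Lemma eigenvector_of_char_root m (A : 'M[O]_2) a b : (m < n)%N ->
  cong_poly pi n (char_poly A) (('X - a%:P) * ('X - b%:P)) ->
  ~ dvdO (pi ^+ m.+1) (a - b) ->
  exists e : 'cV[O]_2,
    ~ cong_mx pi n (pi ^+ (n - m - 1) *: e) 0 /\ cong_mx pi n (A *m e) (a *: e).
Proof.
move=> lt_mn charA ndvd; apply: eigenvector_mx2 => //.
  move: (cong_poly_horner a charA).
  by rewrite horner_char_poly hornerM hornerXsubC subrr mul0r.
have trA : congO pi n (- \tr A) (- (a + b)).
  have := @coefPn_prod_XsubC _ [:: a; b] isT; rewrite !big_cons !big_nil mulr1 addr0 /= => <-.
  by rewrite -char_poly_trace //; apply: charA.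
move=> dvd_tr; apply: ndvd.
have -> : a - b = \tr (a%:M - A) - (- \tr A - - (a + b)).
  by rewrite raddfB /= mxtrace_scalar; ring.
exact: dvdOD dvd_tr (dvdON (dvdO_trans (dvdO_exp2l pi lt_mn) trA)).
Qed.

End Congruence.

Theorem lemma4p1 (p : nat) (O : idomainType) (pi : O)
  (hO : padic_integer_ring p pi) (n : nat) (hn : (1 <= n)%N)
  (A : 'M[O]_2) (alpha beta : O) (m : nat) (hm : (m <= n - 1)%N)
  (hf : cong_poly pi n (char_poly A) (('X - alpha%:P) * ('X - beta%:P)))
  (hdiv : dvdO (pi ^+ m) (alpha - beta))
  (hexact : ~ dvdO (pi ^+ m.+1) (alpha - beta)) :
  exists e1 e2 : 'cV[O]_2,
    [/\ ~ cong_mx pi n (pi ^+ (n - m - 1) *: e1) 0,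
        ~ cong_mx pi n (pi ^+ (n - m - 1) *: e2) 0,
        cong_mx pi n (A *m e1) (alpha *: e1) &
        cong_mx pi n (A *m e2) (beta *: e2)].
Proof.
have [[_ [pi_neq0 _]] _ _ _ _] := hO.
have lt_mn : (m < n)%N by lia.
have [e1 [e1_neq0 Ae1]] := eigenvector_of_char_root pi_neq0 lt_mn hf hexact.
have hf' : cong_poly pi n (char_poly A) (('X - beta%:P) * ('X - alpha%:P)).
  by rewrite mulrC.
have hexact' : ~ dvdO (pi ^+ m.+1) (beta - alpha).
  by rewrite -opprB => /dvdON; rewrite opprK.
have [e2 [e2_neq0 Ae2]] := eigenvector_of_char_root pi_neq0 lt_mn hf' hexact'.
by exists e1, e2.
Qed.
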